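(* For every integer $n\ge5$, $3b(n)-\tfrac32\le \tilde m_{\mathrm{opt}}(n)<3b(n)+\tfrac12$; equivalently, $\tilde m_{\mathrm{opt}}(n)$ equals $\lceil 3b(n)-\frac32\rceil$ or $\lceil 3b(n)-\frac32\rceil+1$.
   Context: Let $b(n)=(1+\frac1n)\log_2(n+1)-1$. For $1\le m\le n$ put $E_m[\ell]=\sum_{j=0}^{m-1}\frac{n}{n-j}$ and $\tilde F(m)=\dfrac{2m\,b(n)+\frac12\sum_{j=1}^{m-1}\frac{j(j+1)}{n-j}}{E_m[\ell]}$. Let $\tilde m_{\mathrm{opt}}(n)$ be the smallest $m\in\{1,\dots,n\}$ minimizing $\tilde F(m)$. *)

From Stdlib Require Import Reals Lra Lia List.
Import ListNotations.
Open Scope R_scope.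

Definition log2 (x : R) : R := ln x / ln 2.

Definition b (n : nat) : R := (1 + / INR n) * log2 (INR n + 1) - 1.

Definition E (n m : nat) : R :=
  fold_right Rplus 0 (map (fun j => INR n / (INR n - INR j)) (seq 0 m)).

Definition Ssum (n m : nat) : R :=
  fold_right Rplus 0
    (map (fun j => INR j * (INR j + 1) / (INR n - INR j)) (seq 1 (m - 1))).

Definition Ftilde (n m : nat) : R :=
  (2 * INR m * b n + / 2 * Ssum n m) / E n m.

Definition is_mopt (n m : nat) : Prop :=
  (1 <= m <= n)%nat /\
  (forall k, (1 <= k <= n)%nat -> Ftilde n m <= Ftilde n k) /\
  (forall k, (1 <= k < m)%nat -> Ftilde n m < Ftilde n k).

(* Write Ftilde n m = N_m / E_m with N_m = sum_{j<m} u_j and E_m = sum_{j<m} w_j,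
   w_j = n/(n-j).  By the mediant identity, Ftilde (m+1) - Ftilde m is a positive
   multiple of  K_m = sum_{j<m} w_j (m-j)(m+j+1-4b),  so everything reduces to the
   sign of K_m:
   - if 6b <= 2m+1 then K_m >= 0 (compare the increasing weights w_j with one
     constant weight); applied at m-1 this gives the upper bound on the minimiser;
   - if 6b > 2m+3 then K_m < 0 provided  Phi_m = sum_{j<m} w_j (m-j)(3j-m-3) <= 0.
   Phi_m <= 0 holds as soon as an explicit integer Q(m) is at most
   2m(m+1)(n-m+1).  When it is not, n is small compared with m and b(n) is
   small: a certificate of the form (n+1)^p <= 2^q bounds log2(n+1) and gives
   b(n) <= (2m+3)/6.  For m <= 47 this dichotomy is checked by computation, for
   larger m by a direct estimate. *)

From Stdlib Require Import Reals Lra Lia ZArith List Bool.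
Open Scope R_scope.

Definition sumR (f : nat -> R) (l : list nat) : R := fold_right Rplus 0 (map f l).

Lemma sumR_app f l1 l2 : sumR f (l1 ++ l2) = sumR f l1 + sumR f l2.
Proof. unfold sumR; induction l1 as [|a l IH]; simpl; [lra | rewrite IH; lra]. Qed.

Lemma sumR_seq_S f m : sumR f (seq 0 (S m)) = sumR f (seq 0 m) + f m.
Proof. rewrite seq_S, sumR_app. unfold sumR at 2; simpl. lra. Qed.

Lemma sumR_plus f g l : sumR (fun x => f x + g x) l = sumR f l + sumR g l.
Proof. unfold sumR; induction l as [|a l IH]; simpl; [lra | rewrite IH; lra]. Qed.

Lemma sumR_scal c f l : sumR (fun x => c * f x) l = c * sumR f l.
Proof. unfold sumR; induction l as [|a l IH]; simpl; [lra | rewrite IH; lra]. Qed.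

Lemma sumR_lin a c f g l :
  sumR (fun x => a * f x + c * g x) l = a * sumR f l + c * sumR g l.
Proof. rewrite sumR_plus, !sumR_scal. reflexivity. Qed.

Lemma sumR_le f g l : (forall x, In x l -> f x <= g x) -> sumR f l <= sumR g l.
Proof.
  unfold sumR; induction l as [|a l IH]; simpl; intros H; [lra|].
  specialize (IH (fun x Hx => H x (or_intror Hx))).
  specialize (H a (or_introl eq_refl)). lra.
Qed.

Lemma sumR_ext f g l : (forall x, In x l -> f x = g x) -> sumR f l = sumR g l.
Proof. intros H; apply Rle_antisym; apply sumR_le; intros x Hx; rewrite (H x Hx); lra. Qed.

Lemma sumR_nonneg f l : (forall x, In x l -> 0 <= f x) -> 0 <= sumR f l.
Proof.
  unfold sumR; induction l as [|a l IH]; simpl; intros H; [lra|].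
  specialize (IH (fun x Hx => H x (or_intror Hx))).
  specialize (H a (or_introl eq_refl)). lra.
Qed.

Lemma sumR_pos f m : (1 <= m)%nat -> (forall j, (j < m)%nat -> 0 < f j) ->
  0 < sumR f (seq 0 m).
Proof.
  intros Hm H. destruct m as [|m]; [lia|]. rewrite sumR_seq_S.
  assert (0 <= sumR f (seq 0 m)).
  { apply sumR_nonneg. intros x Hx. apply in_seq in Hx. left; apply H; lia. }
  specialize (H m ltac:(lia)). lra.
Qed.

Lemma sumR_quad a c d m :
  sumR (fun j => a + c * INR j + d * (INR j * INR j)) (seq 0 m)
  = a * INR m + c * (INR m * (INR m - 1) / 2)
    + d * (INR m * (INR m - 1) * (2 * INR m - 1) / 6).
Proof.
  induction m as [|m IH]; [unfold sumR; simpl; lra|].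
  rewrite sumR_seq_S, IH, S_INR. field.
Qed.

Lemma sumR_const c m : sumR (fun _ => c) (seq 0 m) = c * INR m.
Proof.
  rewrite (sumR_ext _ (fun j => c + 0 * INR j + 0 * (INR j * INR j))) by (intros; ring).
  rewrite sumR_quad. ring.
Qed.

Lemma sumR_IZR (f : nat -> Z) l :
  IZR (fold_right Z.add 0%Z (map f l)) = sumR (fun j => IZR (f j)) l.
Proof.
  unfold sumR; induction l as [|a l IH]; simpl; [reflexivity|].
  rewrite plus_IZR, IH. reflexivity.
Qed.

Lemma mediant_diff N E0 u0 w0 : 0 < E0 -> 0 < E0 + w0 ->
  (N + u0) / (E0 + w0) - N / E0 = (u0 * E0 - w0 * N) / (E0 * (E0 + w0)).
Proof. intros. field. lra. Qed.

(** * Ftilde as a ratio of sums and the sign of its increments *)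

Definition w (n j : nat) : R := INR n / (INR n - INR j).
Definition u (n j : nat) : R := 2 * b n + / 2 * (INR j * (INR j + 1) / (INR n - INR j)).

(* Ftilde n (m+1) - Ftilde n m is a positive multiple of K n m. *)
Definition K (n m : nat) : R :=
  sumR (fun j => w n j * ((INR m - INR j) * (INR m + INR j + 1 - 4 * b n))) (seq 0 m).

Lemma E_as_sum n m : E n m = sumR (w n) (seq 0 m).
Proof. reflexivity. Qed.

Lemma E_S n m : E n (S m) = E n m + w n m.
Proof. rewrite !E_as_sum. apply sumR_seq_S. Qed.

Lemma numerator_as_sum n m :
  2 * INR m * b n + / 2 * Ssum n m = sumR (u n) (seq 0 m).
Proof.
  assert (HS : Ssum n m = sumR (fun j => INR j * (INR j + 1) / (INR n - INR j)) (seq 0 m)).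
  { unfold Ssum. destruct m as [|m]; [reflexivity|].
    replace (S m - 1)%nat with m by lia. rewrite <- cons_seq.
    unfold sumR; simpl. unfold Rdiv. rewrite !Rmult_0_l. lra. }
  unfold u. rewrite sumR_plus, HS, sumR_const, sumR_scal. lra.
Qed.

Lemma w_pos n j : (j < n)%nat -> 0 < w n j.
Proof.
  intros H. unfold w. apply lt_INR in H. assert (0 <= INR j) by apply pos_INR.
  apply Rdiv_lt_0_compat; lra.
Qed.

Lemma E_pos n m : (1 <= m)%nat -> (m <= n)%nat -> 0 < E n m.
Proof. intros H1 H2. rewrite E_as_sum. apply sumR_pos; auto. intros; apply w_pos; lia. Qed.

(* u_m E_m - w_m N_m = w_m K_m / (2n): termwise, u_m w_j - w_m u_j equals
   w_m w_j (m-j)(m+j+1-4b) / (2n). *)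
Lemma cross_difference n m : (m < n)%nat ->
  u n m * E n m - w n m * sumR (u n) (seq 0 m) = w n m * K n m / (2 * INR n).
Proof.
  intros Hmn.
  transitivity (sumR (fun j => u n m * w n j + - w n m * u n j) (seq 0 m)).
  { rewrite sumR_lin, E_as_sum. ring. }
  rewrite (sumR_ext _ (fun j => w n m / (2 * INR n) *
             (w n j * ((INR m - INR j) * (INR m + INR j + 1 - 4 * b n))))).
  { rewrite sumR_scal. unfold K, Rdiv. ring. }
  intros j Hj. apply in_seq in Hj.
  assert (INR j < INR n) by (apply lt_INR; lia).
  assert (INR m < INR n) by (apply lt_INR; lia).
  assert (0 <= INR j) by apply pos_INR.
  unfold u, w. field. repeat split; lra.
Qed.

Lemma Ftilde_step n m : (1 <= m)%nat -> (m < n)%nat ->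
  exists c, 0 < c /\ Ftilde n (S m) - Ftilde n m = c * K n m.
Proof.
  intros H1 H2.
  assert (HE := E_pos n m H1 ltac:(lia)). assert (Hw := w_pos n m H2).
  assert (Hn : 0 < INR n) by (apply lt_0_INR; lia).
  exists (w n m / (2 * INR n * E n m * (E n m + w n m))). split.
  { apply Rdiv_lt_0_compat; [lra|]. repeat apply Rmult_lt_0_compat; lra. }
  unfold Ftilde. rewrite !numerator_as_sum, sumR_seq_S, E_S.
  rewrite mediant_diff by lra. rewrite cross_difference by exact H2. field. lra.
Qed.

Lemma Ftilde_descent n m : (1 <= m)%nat -> (m < n)%nat -> K n m < 0 ->
  Ftilde n (S m) < Ftilde n m.
Proof. intros H1 H2 HK. destruct (Ftilde_step n m H1 H2) as [c [Hc Hs]]. nra. Qed.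

Lemma Ftilde_ascent n m : (1 <= m)%nat -> (m < n)%nat -> 0 <= K n m ->
  Ftilde n m <= Ftilde n (S m).
Proof. intros H1 H2 HK. destruct (Ftilde_step n m H1 H2) as [c [Hc Hs]]. nra. Qed.

(** * The sign of K *)

Lemma sum_K_factor n m :
  sumR (fun j => (INR m - INR j) * (INR m + INR j + 1 - 4 * b n)) (seq 0 m)
  = INR m * (INR m + 1) * (2 * INR m + 1 - 6 * b n) / 3.
Proof.
  rewrite (sumR_ext _ (fun j => INR m * (INR m + 1 - 4 * b n)
                                + (4 * b n - 1) * INR j + (-1) * (INR j * INR j)))
    by (intros; ring).
  rewrite sumR_quad. field.
Qed.

(* With x = 4b - m - 1 the factor m+j+1-4b is j - x, and replacing every w_j by
   the constant lam = n/(n-x) can only decrease K, since w_j - lam has the sign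
   of j - x.  The constant-weight sum is lam m(m+1)(2m+1-6b)/3 >= 0. *)
Lemma K_nonneg n m : (1 <= m)%nat -> (m < n)%nat -> 6 * b n <= 2 * INR m + 1 ->
  0 <= K n m.
Proof.
  intros H1 H2 Hb.
  assert (Hm : 1 <= INR m) by (apply (le_INR 1); lia).
  assert (Hmn : INR m + 1 <= INR n) by (rewrite <- S_INR; apply le_INR; lia).
  set (x := 4 * b n - INR m - 1).
  set (lam := INR n / (INR n - x)).
  assert (Hlam : 0 < lam) by (apply Rdiv_lt_0_compat; unfold x; lra).
  apply Rle_trans with
    (lam * sumR (fun j => (INR m - INR j) * (INR m + INR j + 1 - 4 * b n)) (seq 0 m)).
  { rewrite sum_K_factor. apply Rmult_le_pos; [lra|].
    apply Rmult_le_pos; [|lra]. apply Rmult_le_pos; [apply Rmult_le_pos|]; lra. }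
  rewrite <- sumR_scal. apply sumR_le. intros j Hj. apply in_seq in Hj.
  assert (Hj' : INR j + 1 <= INR m) by (rewrite <- S_INR; apply le_INR; lia).
  assert (0 <= INR j) by apply pos_INR.
  assert (Hdiff : w n j * ((INR m - INR j) * (INR m + INR j + 1 - 4 * b n))
     - lam * ((INR m - INR j) * (INR m + INR j + 1 - 4 * b n))
     = INR n * ((INR j - x) * (INR j - x)) * (INR m - INR j)
       / ((INR n - INR j) * (INR n - x))).
  { unfold w, lam, x. field. split; lra. }
  assert (0 <= INR n * ((INR j - x) * (INR j - x)) * (INR m - INR j)
              / ((INR n - INR j) * (INR n - x))).
  { apply Rmult_le_pos.
    - apply Rmult_le_pos; [apply Rmult_le_pos; [lra | apply Rle_0_sqr] | lra].
    - left. apply Rinv_0_lt_compat. apply Rmult_lt_0_compat; unfold x; lra. }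
  lra.
Qed.

Definition Phi (n m : nat) : R :=
  sumR (fun j => w n j * ((INR m - INR j) * (3 * INR j - INR m - 3))) (seq 0 m).

(* Since m+j+1-4b = (3j-m-3)/3 + ((4m+6)/3 - 4b), K splits into Phi/3 plus a
   multiple of a positive sum; that multiple is negative when 6b > 2m+3. *)
Lemma K_neg n m : (1 <= m)%nat -> (m < n)%nat -> (2 * INR m + 3) / 6 < b n ->
  Phi n m <= 0 -> K n m < 0.
Proof.
  intros H1 H2 Hb HP.
  assert (HK : K n m = / 3 * Phi n m + ((4 * INR m + 6) / 3 - 4 * b n)
                       * sumR (fun j => w n j * (INR m - INR j)) (seq 0 m)).
  { unfold Phi. rewrite <- !sumR_scal, <- sumR_plus. apply sumR_ext. intros; field. }
  assert (Hpos : 0 < sumR (fun j => w n j * (INR m - INR j)) (seq 0 m)).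
  { apply sumR_pos; auto. intros j Hj. apply Rmult_lt_0_compat.
    - apply w_pos; lia.
    - apply lt_INR in Hj. lra. }
  rewrite HK. nra.
Qed.

(** * A sufficient condition for Phi <= 0 *)

(* Q(m) = sum_{j<m} j (m-j) max(0, 3j-m-3).  Q(m)/(n-m+1) majorises the excess
   Phi - sum_{j<m} (m-j)(3j-m-3) = sum_{j<m} (j/(n-j)) (m-j)(3j-m-3).
   It is kept in Z so that it can be evaluated. *)
Definition qz (m j : nat) : Z :=
  (Z.of_nat j * (Z.of_nat m - Z.of_nat j) * Z.max 0 (3 * Z.of_nat j - Z.of_nat m - 3))%Z.
Definition Qz (m : nat) : Z := fold_right Z.add 0%Z (map (qz m) (seq 0 m)).

Lemma qz_real m j :
  IZR (qz m j) = INR j * (INR m - INR j) * Rmax 0 (3 * INR j - INR m - 3).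
Proof.
  assert (Ha : IZR (3 * Z.of_nat j - Z.of_nat m - 3) = 3 * INR j - INR m - 3).
  { rewrite !minus_IZR, mult_IZR, <- !INR_IZR_INZ. reflexivity. }
  unfold qz. rewrite !mult_IZR, minus_IZR, <- !INR_IZR_INZ.
  destruct (Z.max_spec 0 (3 * Z.of_nat j - Z.of_nat m - 3)%Z) as [[Hlt Hq]|[Hge Hq]];
    rewrite Hq; apply IZR_lt in Hlt || apply IZR_le in Hge.
  - rewrite Ha in *. rewrite Rmax_right by lra. reflexivity.
  - rewrite Ha in *. rewrite Rmax_left by (simpl in *; lra). reflexivity.
Qed.

(* w_j = 1 + j/(n-j), and j/(n-j) <= j/(n-m+1) on the terms that can be positive. *)
Lemma Phi_term_bound n m j : (j < m)%nat -> (m < n)%nat ->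
  w n j * ((INR m - INR j) * (3 * INR j - INR m - 3))
  <= (INR m - INR j) * (3 * INR j - INR m - 3) + / (INR n - INR m + 1) * IZR (qz m j).
Proof.
  intros Hj Hm. rewrite qz_real.
  assert (Hj' : INR j + 1 <= INR m) by (rewrite <- S_INR; apply le_INR; lia).
  assert (Hm' : INR m + 1 <= INR n) by (rewrite <- S_INR; apply le_INR; lia).
  assert (0 <= INR j) by apply pos_INR.
  set (a := 3 * INR j - INR m - 3).
  assert (Ha : a <= Rmax 0 a) by apply Rmax_r.
  assert (Ha0 : 0 <= Rmax 0 a) by apply Rmax_l.
  assert (Hw : w n j = 1 + INR j / (INR n - INR j)) by (unfold w; field; lra).
  assert (Hr0 : 0 <= INR j / (INR n - INR j)).
  { apply Rmult_le_pos; [lra | left; apply Rinv_0_lt_compat; lra]. }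
  assert (Hr : INR j / (INR n - INR j) <= / (INR n - INR m + 1) * INR j).
  { rewrite Rmult_comm. apply Rmult_le_compat_l; [lra|]. apply Rinv_le_contravar; lra. }
  rewrite Hw.
  assert (INR j / (INR n - INR j) * ((INR m - INR j) * a)
          <= INR j / (INR n - INR j) * ((INR m - INR j) * Rmax 0 a)).
  { apply Rmult_le_compat_l; [lra|]. apply Rmult_le_compat_l; lra. }
  assert (INR j / (INR n - INR j) * ((INR m - INR j) * Rmax 0 a)
          <= / (INR n - INR m + 1) * INR j * ((INR m - INR j) * Rmax 0 a)).
  { apply Rmult_le_compat_r; [apply Rmult_le_pos|]; lra. }
  nra.
Qed.

Lemma Phi_bound n m : (m < n)%nat ->
  Phi n m <= -2 * INR m * (INR m + 1) + / (INR n - INR m + 1) * IZR (Qz m).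
Proof.
  intros Hm. unfold Phi.
  apply Rle_trans with (sumR (fun j => (INR m - INR j) * (3 * INR j - INR m - 3)
                          + / (INR n - INR m + 1) * IZR (qz m j)) (seq 0 m)).
  { apply sumR_le. intros j Hj. apply in_seq in Hj. apply Phi_term_bound; lia. }
  rewrite sumR_plus, sumR_scal. unfold Qz. rewrite sumR_IZR.
  rewrite (sumR_ext _ (fun j => - (INR m * (INR m + 3)) + (4 * INR m + 3) * INR j
                                + (-3) * (INR j * INR j))) by (intros; ring).
  rewrite sumR_quad. right. field. apply lt_INR in Hm. lra.
Qed.

Definition phi_test (m n : nat) : bool :=
  Z.leb (Qz m) (2 * Z.of_nat m * (Z.of_nat m + 1) * (Z.of_nat n - Z.of_nat m + 1))%Z.

Lemma Phi_nonpos n m : (m < n)%nat -> phi_test m n = true -> Phi n m <= 0.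
Proof.
  intros Hm Hc. unfold phi_test in Hc. apply Z.leb_le, IZR_le in Hc.
  rewrite !mult_IZR, !plus_IZR, minus_IZR, <- !INR_IZR_INZ in Hc. simpl IZR in Hc.
  assert (Hm' : INR m + 1 <= INR n) by (rewrite <- S_INR; apply le_INR; lia).
  assert (HB := Phi_bound n m Hm).
  assert (/ (INR n - INR m + 1) * IZR (Qz m) <= 2 * INR m * (INR m + 1)).
  { apply (Rmult_le_reg_l (INR n - INR m + 1)); [lra|].
    rewrite <- Rmult_assoc, Rinv_r by lra. lra. }
  lra.
Qed.

Lemma phi_test_mono m n n' : (n <= n')%nat -> phi_test m n = true -> phi_test m n' = true.
Proof.
  unfold phi_test. rewrite !Z.leb_le. intros H H1.
  assert (0 <= 2 * Z.of_nat m * (Z.of_nat m + 1))%Z by lia. nia.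
Qed.

Lemma ln_le_compat x y : 0 < x -> x <= y -> ln x <= ln y.
Proof. intros Hx [H|H]; [left; now apply ln_increasing | subst; lra]. Qed.

(* A certificate (n+1)^p <= 2^q gives log2(n+1) <= q/p and hence
   b(n) <= (n+1)q/(np) - 1, which is at most (2m+3)/6 under the second test. *)
Lemma b_le_of_certificate (n m p q : nat) : (1 <= n)%nat -> (1 <= p)%nat ->
  ((n + 1) ^ p <= 2 ^ q)%nat -> (6 * (n + 1) * q <= p * (n * (2 * m + 9)))%nat ->
  b n <= (2 * INR m + 3) / 6.
Proof.
  intros Hn Hp H1 H2.
  apply le_INR in H1. rewrite !pow_INR, plus_INR in H1. simpl INR in H1.
  apply le_INR in H2. rewrite !mult_INR, !plus_INR, mult_INR in H2. simpl INR in H2.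
  assert (HN : 1 <= INR n) by (apply (le_INR 1); auto).
  assert (HP : 1 <= INR p) by (apply (le_INR 1); auto).
  assert (Hl2 : 0 < ln 2) by (rewrite <- ln_1; apply ln_increasing; lra).
  set (L := ln (INR n + 1) / ln 2).
  assert (HL : INR p * L <= INR q).
  { assert (INR p * ln (INR n + 1) <= INR q * ln 2).
    { rewrite <- !ln_pow by lra. apply ln_le_compat; [apply pow_lt; lra | exact H1]. }
    unfold L. apply (Rmult_le_reg_r (ln 2)); auto. unfold Rdiv.
    rewrite Rmult_assoc, Rmult_assoc, Rinv_l by lra. lra. }
  assert (HL0 : 0 <= L).
  { unfold L. apply Rmult_le_pos; [|left; apply Rinv_0_lt_compat; auto].
    rewrite <- ln_1. apply ln_le_compat; lra. }
  assert (Hq : (INR n + 1) * L <= INR n * (2 * INR m + 9) / 6).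
  { apply (Rmult_le_reg_l (INR p)); [lra|]. nra. }
  unfold b, log2. fold L.
  replace ((1 + / INR n) * L) with ((INR n + 1) * L / INR n) by (field; lra).
  apply Rle_trans with (INR n * (2 * INR m + 9) / 6 / INR n - 1).
  { unfold Rdiv at 1 3. apply Rplus_le_compat_r.
    apply Rmult_le_compat_r; [left; apply Rinv_0_lt_compat; lra | lra]. }
  right. field. lra.
Qed.

Lemma b_gt_1 n : (5 <= n)%nat -> 1 < b n.
Proof.
  intros H. unfold b, log2.
  assert (Hn : 5 <= INR n) by (replace 5 with (INR 5) by (simpl; lra); apply le_INR; auto).
  assert (Hl2 : 0 < ln 2) by (rewrite <- ln_1; apply ln_increasing; lra).
  assert (H4 : 2 * ln 2 < ln (INR n + 1)).
  { replace (2 * ln 2) with (ln (2 ^ 2)) by (rewrite ln_pow by lra; simpl; lra).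
    apply ln_increasing; lra. }
  assert (HL : 2 < ln (INR n + 1) / ln 2).
  { apply (Rmult_lt_reg_r (ln 2)); auto. unfold Rdiv.
    rewrite Rmult_assoc, Rinv_l by lra. lra. }
  assert (0 < / INR n) by (apply Rinv_0_lt_compat; lra).
  nra.
Qed.

Lemma pow2_ge_succ r : (r + 1 <= 2 ^ r)%nat.
Proof. induction r; simpl; lia. Qed.

(* b(n) <= (2n+3)/6, so no m < 3b - 3/2 can be the last index n. *)
Lemma b_le_top n : (5 <= n)%nat -> b n <= (2 * INR n + 3) / 6.
Proof.
  intros H. destruct (le_lt_dec 12 n) as [Hb|Hs].
  - set (r := (n / 4)%nat).
    assert (Hr : (4 * r <= n < 4 * r + 4)%nat).
    { pose proof (Nat.div_mod n 4 ltac:(lia)).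
      pose proof (Nat.mod_upper_bound n 4 ltac:(lia)). unfold r; lia. }
    assert (Hp := pow2_ge_succ r).
    apply (b_le_of_certificate n n 1 (r + 2)); try lia.
    + rewrite Nat.pow_1_r, Nat.pow_add_r. simpl (2 ^ 2)%nat. lia.
    + nia.
  - assert (Hc : n = 5%nat \/ n = 6%nat \/ n = 7%nat \/ n = 8%nat \/ n = 9%nat
                 \/ n = 10%nat \/ n = 11%nat) by lia.
    destruct Hc as [->|[->|[->|[->|[->|[->| ->]]]]]].
    + apply (b_le_of_certificate 5 5 5 13); vm_compute; try lia; discriminate.
    + apply (b_le_of_certificate 6 6 1 3); vm_compute; try lia; discriminate.
    + apply (b_le_of_certificate 7 7 1 3); vm_compute; try lia; discriminate.
    + apply (b_le_of_certificate 8 8 2 7); vm_compute; try lia; discriminate.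
    + apply (b_le_of_certificate 9 9 1 4); vm_compute; try lia; discriminate.
    + apply (b_le_of_certificate 10 10 1 4); vm_compute; try lia; discriminate.
    + apply (b_le_of_certificate 11 11 1 4); vm_compute; try lia; discriminate.
Qed.

(** * The dichotomy: Phi(n,m) <= 0 or b(n) <= (2m+3)/6 *)

(* Boolean certificate for b(n) <= (2m+3)/6 with p = 1, q = ceil(log2(n+1));
   values n < 5 are outside the range of the theorem and accepted vacuously. *)
Definition b_test (m n : nat) : bool :=
  Nat.ltb n 5 || (let k := Nat.log2_up (n + 1) in
                  Nat.leb (n + 1) (2 ^ k) && Nat.leb (6 * (n + 1) * k) (n * (2 * m + 9)))%nat.

Lemma b_test_sound m n : (5 <= n)%nat -> b_test m n = true -> b n <= (2 * INR m + 3) / 6.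
Proof.
  intros Hn H. unfold b_test in H. apply orb_true_iff in H. destruct H as [H|H].
  - apply Nat.ltb_lt in H. lia.
  - apply andb_true_iff in H. destruct H as [H1 H2]. apply Nat.leb_le in H1, H2.
    apply (b_le_of_certificate n m 1 (Nat.log2_up (n + 1))); try lia.
    rewrite Nat.pow_1_r. exact H1.
Qed.

(* Scans n, n+1, ...: accepts once phi_test holds (which then persists),
   provided b_test holds at every earlier point. *)
Fixpoint certified_from (m n fuel : nat) : bool :=
  match fuel with
  | O => false
  | S f => if phi_test m n then true
            else if b_test m n then certified_from m (S n) f else false
  end.

Lemma certified_from_sound m fuel : forall n0, certified_from m n0 fuel = true ->
  forall n, (n0 <= n)%nat -> phi_test m n = true \/ b_test m n = true.
Proof.
  induction fuel as [|f IH]; intros n0 H n Hn; simpl in H; [discriminate|].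
  destruct (phi_test m n0) eqn:Hphi; [left; exact (phi_test_mono m n0 n Hn Hphi)|].
  destruct (b_test m n0) eqn:Hb; [|discriminate].
  destruct (Nat.eq_dec n n0) as [->|Hne]; [right; exact Hb|].
  apply (IH (S n0)); auto. lia.
Qed.

Lemma small_m_certified :
  forallb (fun m => certified_from m (S m) 300) (seq 1 47) = true.
Proof. vm_compute. reflexivity. Qed.

Lemma sumZ_le (f : nat -> Z) l M : (forall x, In x l -> (f x <= M)%Z) ->
  (fold_right Z.add 0 (map f l) <= Z.of_nat (length l) * M)%Z.
Proof.
  induction l as [|a l IH]; intros H; cbn [map fold_right length]; [lia|].
  specialize (IH (fun x Hx => H x (or_intror Hx))).
  specialize (H a (or_introl eq_refl)). rewrite Nat2Z.inj_succ, Z.mul_succ_l. lia.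
Qed.

(* Each term of Q(m) is at most m^2 * 2m. *)
Lemma Qz_le m : (Qz m <= 2 * Z.of_nat m ^ 4)%Z.
Proof.
  unfold Qz. eapply Z.le_trans; [apply (sumZ_le _ _ (2 * Z.of_nat m ^ 3))|].
  - intros j Hj. apply in_seq in Hj. unfold qz.
    set (x := Z.of_nat j). set (y := Z.of_nat m).
    assert (Hx : (0 <= x < y)%Z) by (unfold x, y; lia).
    assert (Hjm : (0 <= x * (y - x) <= y * y)%Z) by nia.
    destruct (Z.max_spec 0 (3 * x - y - 3)) as [[A B]|[A B]]; rewrite B; [|nia].
    assert (x * (y - x) * (3 * x - y - 3) <= (y * y) * (3 * x - y - 3))%Z
      by (apply Z.mul_le_mono_nonneg_r; lia).
    assert ((y * y) * (3 * x - y - 3) <= (y * y) * (2 * y))%Z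
      by (apply Z.mul_le_mono_nonneg_l; lia).
    lia.
  - rewrite length_seq. nia.
Qed.

Lemma pow2_ge_quadratic q : (12 <= q)%nat -> ((4 * q + 3) * (4 * q + 3) + (4 * q + 3) <= 2 ^ q)%nat.
Proof.
  induction q as [|q IH]; intros H; [lia|].
  destruct (Nat.eq_dec q 11) as [->|Hq]; [simpl; lia|].
  specialize (IH ltac:(lia)). rewrite Nat.pow_succ_r'. nia.
Qed.

(* For m >= 48 failure of phi_test forces n + 1 < m^2 + m <= 2^(m/4), and the
   certificate with q = m/4 applies. *)
Lemma large_m_dichotomy n m : (48 <= m)%nat -> (m < n)%nat -> phi_test m n = false ->
  b n <= (2 * INR m + 3) / 6.
Proof.
  intros Hm Hmn Hc. unfold phi_test in Hc. apply Z.leb_gt in Hc. assert (HQ := Qz_le m).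
  assert (Hnm : (n + 1 < m * m + m)%nat).
  { assert ((Z.of_nat m + 1) * (Z.of_nat n - Z.of_nat m + 1) < Z.of_nat m ^ 3)%Z by nia.
    nia. }
  set (q := (m / 4)%nat).
  assert (Hq : (4 * q <= m < 4 * q + 4)%nat).
  { pose proof (Nat.div_mod m 4 ltac:(lia)).
    pose proof (Nat.mod_upper_bound m 4 ltac:(lia)). unfold q; lia. }
  assert (Hp := pow2_ge_quadratic q ltac:(lia)).
  apply (b_le_of_certificate n m 1 q); try lia; [rewrite Nat.pow_1_r|]; nia.
Qed.

Lemma dichotomy n m : (5 <= n)%nat -> (1 <= m)%nat -> (m < n)%nat ->
  Phi n m <= 0 \/ b n <= (2 * INR m + 3) / 6.
Proof.
  intros H5 H1 H2.
  destruct (phi_test m n) eqn:Ht; [left; now apply Phi_nonpos | right].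
  destruct (le_lt_dec m 47) as [Hs|Hl]; [|now apply large_m_dichotomy].
  assert (Hc : certified_from m (S m) 300 = true).
  { apply (proj1 (forallb_forall _ _) small_m_certified). apply in_seq; lia. }
  destruct (certified_from_sound m 300 (S m) Hc n ltac:(lia)) as [C|C];
    [congruence | now apply b_test_sound].
Qed.

Lemma least_minimiser_exists (f : nat -> R) n : (1 <= n)%nat -> exists m,
  (1 <= m <= n)%nat /\ (forall k, (1 <= k <= n)%nat -> f m <= f k) /\
  (forall k, (1 <= k < m)%nat -> f m < f k).
Proof.
  induction n as [|n IH]; intros H; [lia|].
  destruct (Nat.eq_dec n 0) as [->|Hn].
  { exists 1%nat. split; [lia|]. split; intros k Hk; [replace k with 1%nat by lia; lra | lia]. }
  destruct (IH ltac:(lia)) as [m [Hm [Hmin Hst]]].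
  destruct (Rlt_dec (f (S n)) (f m)) as [Hl|Hl].
  - exists (S n). split; [lia|]. split.
    + intros k Hk. destruct (Nat.eq_dec k (S n)) as [->|]; [lra|].
      specialize (Hmin k ltac:(lia)). lra.
    + intros k Hk. specialize (Hmin k ltac:(lia)). lra.
  - exists m. split; [lia|]. split; auto.
    intros k Hk. destruct (Nat.eq_dec k (S n)) as [->|]; [lra | apply Hmin; lia].
Qed.

(* Below 3b - 3/2 the function still strictly decreases at the next step. *)
Lemma mopt_lower n m : (5 <= n)%nat -> is_mopt n m -> 3 * b n - 3 / 2 <= INR m.
Proof.
  intros H5 [Hr [Hmin _]].
  destruct (Rle_lt_dec (3 * b n - 3 / 2) (INR m)) as [|Hlt]; auto. exfalso.
  destruct (Nat.eq_dec m n) as [->|Hne]; [assert (HN := b_le_top n H5); lra|].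
  destruct (dichotomy n m H5 ltac:(lia) ltac:(lia)) as [HP|HB]; [|lra].
  assert (HK := K_neg n m ltac:(lia) ltac:(lia) ltac:(lra) HP).
  assert (HF := Ftilde_descent n m ltac:(lia) ltac:(lia) HK).
  specialize (Hmin (S m) ltac:(lia)). lra.
Qed.

(* At or above 3b + 1/2 the previous value is no larger, contradicting leastness. *)
Lemma mopt_upper n m : (5 <= n)%nat -> is_mopt n m -> INR m < 3 * b n + 1 / 2.
Proof.
  intros H5 [Hr [_ Hst]]. assert (Hb1 := b_gt_1 n H5).
  destruct (Rlt_le_dec (INR m) (3 * b n + 1 / 2)) as [|Hge]; auto. exfalso.
  destruct m as [|[|m']]; [simpl in Hge; lra | simpl in Hge; lra|].
  rewrite S_INR in Hge.
  assert (HK := K_nonneg n (S m') ltac:(lia) ltac:(lia) ltac:(lra)).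
  assert (HF := Ftilde_ascent n (S m') ltac:(lia) ltac:(lia) HK).
  specialize (Hst (S m') ltac:(lia)). lra.
Qed.

Theorem mainTheorem3 : forall n : nat, (5 <= n)%nat ->
  (exists m, is_mopt n m) /\
  (forall m : nat, is_mopt n m ->
     3 * b n - 3 / 2 <= INR m /\ INR m < 3 * b n + 1 / 2).
Proof.
  intros n H5. split.
  - exact (least_minimiser_exists (Ftilde n) n ltac:(lia)).
  - intros m Hm. split; [exact (mopt_lower n m H5 Hm) | exact (mopt_upper n m H5 Hm)].
Qed.
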